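(* Let $\mathcal H$ be the Hilbert space of $n$ qubits, $d=2^n$. Let $\mathsf H_0=\{|\Psi\rangle\langle\Psi| : |\Psi\rangle=|\phi\rangle\otimes|\psi\rangle,\ |\phi\rangle,|\psi\rangle\in\mathcal H \text{ unit vectors}\}$ and $\mathsf H_1=\{|\Psi\rangle\langle\Psi| : |\Psi\rangle\in\mathcal H^{\otimes2}\text{ maximally entangled}\}$. Then for every POVM $\{M_0,M_1\}$ on $\mathcal H^{\otimes 2}$ (outcome $i$ meaning ''the state is in $\mathsf H_i$''), $$\sup_{\rho\in\mathsf H_0}\operatorname{tr}(M_1\rho)+\sup_{\rho\in\mathsf H_1}\operatorname{tr}(M_0\rho)\ \ge\ 1;$$ in particular, if $\operatorname{tr}(M_0\rho)\le\delta$ for all $\rho\in\mathsf H_1$, then $\operatorname{tr}(M_1\rho)\ge1-\delta$ for some $\rho\in\mathsf H_0$, i.e., no measurement distinguishes $\mathsf H_0$ from $\mathsf H_1$ better than guessing at random.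
   Context: A pure state $|\Psi\rangle\in\mathcal H^{\otimes 2}$ is maximally entangled if $|\Psi\rangle=\sum_{i=1}^d\alpha_i|e_i\rangle\otimes|f_i\rangle$ with $|\alpha_i|^2=1/d$ for all $i$, for some orthonormal bases $\{|e_i\rangle\}$ and $\{|f_i\rangle\}$ of $\mathcal H$. A POVM $\{M_0,M_1\}$ is a pair of positive semidefinite operators with $M_0+M_1=I$; outcome $i$ occurs with probability $\operatorname{tr}(M_i\rho)$. *)

From HB Require Import structures.
From mathcomp Require Import all_boot all_order all_algebra.
From mathcomp Require Import complex mxtens.
From mathcomp Require Import boolp classical_sets reals.
Set Implicit Arguments. Unset Strict Implicit. Unset Printing Implicit Defensive.
Import Order.TTheory GRing.Theory Num.Theory.
Local Open Scope ring_scope.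
Local Open Scope classical_set_scope.

Definition adj (R : rcfType) (m n : nat) (A : 'M[R[i]]_(m, n)) : 'M[R[i]]_(n, m) :=
  (map_mx Num.conj A)^T.

Definition psd (R : rcfType) (N : nat) (A : 'M[R[i]]_N) : Prop :=
  A = adj A /\ forall v : 'cV[R[i]]_N, 0 <= (adj v *m A *m v) 0 0.

Definition povm2 (R : rcfType) (N : nat) (M0 M1 : 'M[R[i]]_N) : Prop :=
  psd M0 /\ psd M1 /\ M0 + M1 = 1%:M.

Definition unit_vec (R : rcfType) (N : nat) (v : 'cV[R[i]]_N) : Prop :=
  (adj v *m v) 0 0 = 1.

Definition proj (R : rcfType) (N : nat) (v : 'cV[R[i]]_N) : 'M[R[i]]_N :=
  v *m adj v.

Definition orthonormal_basis (R : rcfType) (d : nat) (e : 'I_d -> 'cV[R[i]]_d) : Prop :=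
  forall i j : 'I_d, (adj (e i) *m e j) 0 0 = (i == j)%:R.

Definition max_entangled (R : rcfType) (d : nat) (Psi : 'cV[R[i]]_(d * d)) : Prop :=
  exists (e f : 'I_d -> 'cV[R[i]]_d) (alpha : 'I_d -> R[i]),
    [/\ orthonormal_basis e, orthonormal_basis f,
        (forall k, `|alpha k| ^+ 2 = d%:R^-1)
      & Psi = \sum_(k < d) alpha k *: (e k *t f k)].

Definition H0 (R : rcfType) (d : nat) : set 'M[R[i]]_(d * d) :=
  [set rho | exists phi psi : 'cV[R[i]]_d,
     [/\ unit_vec phi, unit_vec psi & rho = proj (phi *t psi)]].

Definition H1 (R : rcfType) (d : nat) : set 'M[R[i]]_(d * d) :=
  [set rho | exists Psi : 'cV[R[i]]_(d * d), max_entangled Psi /\ rho = proj Psi].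

(* tr(M rho), as a real number (real part; it is real for psd M and rho) *)
Definition prob (R : rcfType) (N : nat) (M rho : 'M[R[i]]_N) : R :=
  complex.Re (\tr (M *m rho)).

From HB Require Import structures.
From mathcomp Require Import all_boot all_order all_algebra.
From mathcomp Require Import complex mxtens.
From mathcomp Require Import boolp classical_sets reals.
From mathcomp Require Import ring.
Set Implicit Arguments. Unset Strict Implicit. Unset Printing Implicit Defensive.
Import Order.TTheory GRing.Theory Num.Theory.
Local Open Scope ring_scope.

(* Twirling by random signs.  For s in {±1}^d put Psi_s = d^(-1/2) sum_k s_k |kk>,
   a maximally entangled vector.  Averaging <Psi_s|M|Psi_s> over all s kills the
   cross terms <kk|M|ll> (k <> l), leaving (1/d) sum_k <kk|M|kk>.  Hence for
   M := M1 some Psi_s and some product vector |kk> satisfy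
   tr(M1 Psi_s) <= tr(M1 |kk><kk|), and then
   tr(M1 |kk><kk|) + tr(M0 Psi_s) >= tr(M1 Psi_s) + tr(M0 Psi_s) = 1. *)

Lemma exists_le_of_card_sum (R : realDomainType) (I J : finType) (i0 : I) (j0 : J)
    (F : I -> R) (G : J -> R) :
  #|J|%:R * \sum_i F i <= #|I|%:R * \sum_j G j -> exists i j, F i <= G j.
Proof.
move=> le_sums.
case: (@arg_minP _ _ _ i0 xpredT F) => // i _ min_i.
case: (@arg_maxP _ _ _ j0 xpredT G) => // j _ max_j.
exists i, j.
have IJ_gt0 : 0 < #|I|%:R * #|J|%:R :> R.
  rewrite -natrM ltr0n muln_gt0.
  by apply/andP; split; apply/card_gt0P; [exists i0 | exists j0].
have le_F : #|I|%:R * F i <= \sum_i F i.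
  by rewrite mulr_natl -sumr_const; apply: ler_sum => k _; apply: min_i.
have le_G : \sum_j G j <= #|J|%:R * G j.
  by rewrite mulr_natl -sumr_const; apply: ler_sum => k _; apply: max_j.
rewrite -(ler_pM2l IJ_gt0).
have -> : #|I|%:R * #|J|%:R * F i = #|J|%:R * (#|I|%:R * F i) by ring.
have -> : #|I|%:R * #|J|%:R * G j = #|I|%:R * (#|J|%:R * G j) by ring.
apply: le_trans (ler_wpM2l (ler0n _ _) le_F) _.
apply: le_trans le_sums _.
by apply: ler_wpM2l; [exact: ler0n | exact: le_G].
Qed.

Lemma sum_sign_mul (R : numDomainType) (d : nat) (k l : 'I_d) :
  \sum_(s : {ffun 'I_d -> bool}) (-1) ^+ s k * (-1) ^+ s l
    = (k == l)%:R * (2 ^ d)%:R :> R.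
Proof.
have [<-|neq_kl] := eqVneq k l.
  rewrite mul1r (eq_bigr (fun _ => 1)) => [|s _]; last by rewrite -expr2 sqrr_sign.
  by rewrite sumr_const card_ffun card_bool card_ord.
pose flip (s : {ffun 'I_d -> bool}) : {ffun 'I_d -> bool} :=
  [ffun j => (j == k) (+) s j].
have flipK : involutive flip.
  by move=> s; apply/ffunP => j; rewrite !ffunE addbA addbb.
(* Flipping the k-th sign negates every term. *)
set S := \sum_s _; have : S = - S.
  rewrite {1}/S (reindex_inj (inv_inj flipK)) -sumrN; apply: eq_bigr => s _.
  rewrite !ffunE eqxx eq_sym (negbTE neq_kl) /=.
  by case: (s k); rewrite ?expr0 ?expr1; ring.
by move/eqP; rewrite -addr_eq0 -mulr2n mulrn_eq0 /= mul0r => /eqP.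
Qed.

Section Adjoint.
Variable R : rcfType.
Local Notation C := R[i].

Lemma adjD m n (A B : 'M[C]_(m, n)) : adj (A + B) = adj A + adj B.
Proof. by apply/matrixP => i j; rewrite !mxE rmorphD. Qed.

Lemma adj0 m n : adj (0 : 'M[C]_(m, n)) = 0.
Proof. by apply/matrixP => i j; rewrite !mxE rmorph0. Qed.

Lemma adjZ m n (a : C) (A : 'M[C]_(m, n)) : adj (a *: A) = Num.conj a *: adj A.
Proof. by apply/matrixP => i j; rewrite !mxE rmorphM. Qed.

Lemma adj_sum m n d (F : 'I_d -> 'M[C]_(m, n)) :
  adj (\sum_k F k) = \sum_k adj (F k).
Proof. exact: (big_morph _ (@adjD m n) (@adj0 m n)). Qed.

Lemma adj_tens m n p q (A : 'M[C]_(m, n)) (B : 'M[C]_(p, q)) :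
  adj (A *t B) = adj A *t adj B.
Proof. by rewrite /adj map_mxT trmx_tens. Qed.

Lemma inner_tens m n (x x' : 'cV[C]_m) (y y' : 'cV[C]_n) :
  (adj (x *t y) *m (x' *t y')) 0 0 = (adj x *m x') 0 0 * (adj y *m y') 0 0.
Proof. by rewrite adj_tens tensmx_mul mxE !(ord1 (_ : 'I_1)). Qed.

Lemma orthonormal_basis_delta d :
  orthonormal_basis (fun k : 'I_d => delta_mx k 0 : 'cV[C]_d).
Proof.
move=> k l; rewrite /adj map_delta_mx trmx_delta mul_delta_mx_cond.
by case: eqP; rewrite !mxE.
Qed.

Definition sesq N (A : 'M[C]_N) (u v : 'cV[C]_N) : C := (adj u *m A *m v) 0 0.

Lemma sesq_sum N d (A : 'M[C]_N) (a b : 'I_d -> C) (x y : 'I_d -> 'cV[C]_N) :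
  sesq A (\sum_k a k *: x k) (\sum_l b l *: y l)
    = \sum_k \sum_l Num.conj (a k) * b l * sesq A (x k) (y l).
Proof.
rewrite /sesq adj_sum !mulmx_suml summxE; apply: eq_bigr => k _.
rewrite adjZ -!scalemxAl mulmx_sumr mxE summxE mulr_sumr; apply: eq_bigr => l _.
by rewrite -scalemxAr !mxE mulrA.
Qed.

Lemma mxtrace_mul_proj N (A : 'M[C]_N) (v : 'cV[C]_N) :
  \tr (A *m proj v) = sesq A v v.
Proof. by rewrite /sesq /proj mulmxA mxtrace_mulC mulmxA /mxtrace big_ord1 mxE. Qed.

End Adjoint.

Section SignCombination.
Variable R : rcfType.
Local Notation C := R[i].

Definition sign_comb N d (c : C) (s : {ffun 'I_d -> bool}) (x : 'I_d -> 'cV[C]_N) :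
  'cV[C]_N := \sum_k (c * (-1) ^+ s k) *: x k.

Lemma sum_sesq_sign_comb N d (A : 'M[C]_N) (c : C) (x : 'I_d -> 'cV[C]_N) :
  \sum_s sesq A (sign_comb c s x) (sign_comb c s x)
    = (2 ^ d)%:R * `|c| ^+ 2 * \sum_k sesq A (x k) (x k).
Proof.
have coefE (b b' : bool) : Num.conj (c * (-1) ^+ b) * (c * (-1) ^+ b')
    = `|c| ^+ 2 * ((-1) ^+ b * (-1) ^+ b').
  by rewrite rmorphM rmorph_sign normCK; ring.
under eq_bigr do rewrite sesq_sum.
rewrite exchange_big mulr_sumr; apply: eq_bigr => k _ /=.
rewrite exchange_big /=.
under eq_bigr => l _.
  under eq_bigr do rewrite coefE.
  rewrite -mulr_suml -mulr_sumr sum_sign_mul.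
  over.
rewrite (bigD1 k) //= eqxx big1 ?addr0; first by rewrite mulr1n; ring.
by move=> l neq_lk; rewrite eq_sym (negbTE neq_lk) mulr0n; ring.
Qed.

Lemma exists_sign_comb_le N d (A : 'M[C]_N) (c : C) (x : 'I_d -> 'cV[C]_N) :
  (0 < d)%N -> `|c| ^+ 2 = d%:R^-1 ->
  exists s k, complex.Re (sesq A (sign_comb c s x) (sign_comb c s x))
              <= complex.Re (sesq A (x k) (x k)).
Proof.
move=> d_gt0 norm_c.
apply: (exists_le_of_card_sum [ffun=> false] (Ordinal d_gt0)
  (F := fun s => complex.Re (sesq A (sign_comb c s x) (sign_comb c s x)))
  (G := fun k => complex.Re (sesq A (x k) (x k)))).
rewrite card_ffun card_bool card_ord -!raddf_sum /= sum_sesq_sign_comb norm_c.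
set z := \sum_k _.
have -> : (2 ^ d)%:R * d%:R^-1 = ((2 ^ d)%:R / d%:R : R)%:C%C.
  by rewrite rmorphM fmorphV /= !rmorph_nat.
have -> : complex.Re (((2 ^ d)%:R / d%:R)%:C%C * z) = (2 ^ d)%:R / d%:R * complex.Re z.
  by case: z => a b /=; rewrite mul0r subr0.
by rewrite mulrA (mulrC d%:R) divfK // pnatr_eq0 -lt0n.
Qed.

End SignCombination.

Section States.
Variable R : rcfType.
Local Notation C := R[i].

Lemma unit_vec_tens m n (phi : 'cV[C]_m) (psi : 'cV[C]_n) :
  unit_vec phi -> unit_vec psi -> unit_vec (phi *t psi).
Proof. by rewrite /unit_vec inner_tens => -> ->; rewrite mulr1. Qed.

Lemma max_entangled_unit_vec d (Psi : 'cV[C]_(d * d)) :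
  (0 < d)%N -> max_entangled Psi -> unit_vec Psi.
Proof.
move=> d_gt0 [e [f [alpha [ortho_e ortho_f norm_alpha ->]]]].
rewrite /unit_vec -[X in (X *m _) 0 0]mulmx1 -/(sesq _ _ _) sesq_sum.
under eq_bigr => k _.
  rewrite (bigD1 k) //= big1 ?addr0 => [|l neq_lk]; last first.
    by rewrite /sesq mulmx1 inner_tens ortho_e ortho_f eq_sym (negbTE neq_lk) !mulr0.
  rewrite /sesq mulmx1 inner_tens ortho_e ortho_f eqxx !mulr1 mulrC -normCK norm_alpha.
  over.
by rewrite /= sumr_const card_ord -[_ *+ d]mulr_natr mulVf // pnatr_eq0 -lt0n.
Qed.

Definition ket_kk d (k : 'I_d) : 'cV[C]_(d * d) :=
  (delta_mx k 0 : 'cV_d) *t (delta_mx k 0 : 'cV_d).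

Lemma max_entangled_sign_comb d (c : C) (s : {ffun 'I_d -> bool}) :
  `|c| ^+ 2 = d%:R^-1 -> max_entangled (sign_comb c s (@ket_kk d)).
Proof.
move=> norm_c; exists (fun k => delta_mx k 0), (fun k => delta_mx k 0).
exists (fun k => c * (-1) ^+ s k); split=> //; try exact: orthonormal_basis_delta.
by move=> k; rewrite normrM normr_sign mulr1.
Qed.

Lemma H0_unit_proj d (rho : 'M[C]_(d * d)) :
  H0 rho -> exists2 v, unit_vec v & rho = proj v.
Proof.
case=> phi [psi [unit_phi unit_psi ->]].
by exists (phi *t psi) => //; apply: unit_vec_tens.
Qed.

Lemma H1_unit_proj d (rho : 'M[C]_(d * d)) :
  (0 < d)%N -> H1 rho -> exists2 v, unit_vec v & rho = proj v.
Proof.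
by move=> d_gt0 [Psi [me_Psi ->]]; exists Psi => //; apply: max_entangled_unit_vec.
Qed.

Lemma prob_proj N (M : 'M[C]_N) (v : 'cV[C]_N) :
  prob M (proj v) = complex.Re (sesq M v v).
Proof. by rewrite /prob mxtrace_mul_proj. Qed.

Lemma psd_prob_ge0 N (M : 'M[C]_N) (v : 'cV[C]_N) : psd M -> 0 <= prob M (proj v).
Proof.
by case=> _ M_ge0; rewrite prob_proj; move: (M_ge0 v); rewrite lecE => /andP[].
Qed.

Lemma povm2_prob_add N (M0 M1 : 'M[C]_N) (v : 'cV[C]_N) :
  povm2 M0 M1 -> unit_vec v -> prob M0 (proj v) + prob M1 (proj v) = 1.
Proof.
case=> _ [_ M01] unit_v; rewrite !prob_proj -raddfD /=.
have -> : sesq M0 v v + sesq M1 v v = sesq (M0 + M1) v v.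
  by rewrite /sesq mulmxDr mulmxDl !mxE.
by rewrite M01 /sesq mulmx1 unit_v.
Qed.

Lemma povm2_prob_le1 N (M0 M1 : 'M[C]_N) (v : 'cV[C]_N) :
  povm2 M0 M1 -> unit_vec v -> prob M0 (proj v) <= 1 /\ prob M1 (proj v) <= 1.
Proof.
move=> P unit_v; have [psd_M0 [psd_M1 _]] := P.
rewrite -(povm2_prob_add P unit_v).
by split; [rewrite lerDl | rewrite lerDr]; apply: psd_prob_ge0.
Qed.

Lemma exists_H0_H1_prob_ge1 d (M0 M1 : 'M[C]_(d * d)) :
  (0 < d)%N -> povm2 M0 M1 ->
  exists rho sigma, [/\ H0 rho, H1 sigma & 1 <= prob M1 rho + prob M0 sigma].
Proof.
move=> d_gt0 P.
pose c : C := (sqrtC d%:R)^-1.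
have norm_c : `|c| ^+ 2 = d%:R^-1.
  by rewrite normfV exprVn ger0_norm ?sqrtC_ge0 ?ler0n // sqrtCK.
have [s [k le_M1]] := exists_sign_comb_le M1 (@ket_kk d) d_gt0 norm_c.
have me_Psi := max_entangled_sign_comb s norm_c.
exists (proj (ket_kk k)), (proj (sign_comb c s (@ket_kk d))); split.
- exists (delta_mx k 0), (delta_mx k 0); split=> //;
    by rewrite /unit_vec orthonormal_basis_delta eqxx.
- by exists (sign_comb c s (@ket_kk d)).
rewrite -(povm2_prob_add P (max_entangled_unit_vec d_gt0 me_Psi)) addrC lerD2r.
by rewrite !prob_proj.
Qed.

End States.

Local Open Scope classical_set_scope.

Lemma prob_le_sup (R : realType) N (S : set 'M[R[i]]_N) (M rho : 'M[R[i]]_N) :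
  S rho -> (forall sigma, S sigma -> prob M sigma <= 1) ->
  prob M rho <= sup [set prob M sigma | sigma in S].
Proof.
move=> S_rho le1; apply: sup_upper_bound; last by exists rho.
split; first by exists (prob M rho), rho.
by exists 1 => _ [sigma S_sigma <-]; apply: le1.
Qed.

Theorem theorem6p1 (R : realType) (n : nat) (M0 M1 : 'M[R[i]]_(2 ^ n * 2 ^ n)) :
  povm2 M0 M1 ->
  1 <= sup [set prob M1 rho | rho in @H0 R (2 ^ n)]
       + sup [set prob M0 rho | rho in @H1 R (2 ^ n)]
  /\ (forall delta : R,
        (forall rho, @H1 R (2 ^ n) rho -> prob M0 rho <= delta) ->
        exists rho, @H0 R (2 ^ n) rho /\ 1 - delta <= prob M1 rho).
Proof.
move=> P; have d_gt0 : (0 < 2 ^ n)%N by rewrite expn_gt0.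
have [rho [sigma [H0_rho H1_sigma le_1]]] := exists_H0_H1_prob_ge1 d_gt0 P.
split.
  apply: le_trans le_1 _; apply: lerD; apply: prob_le_sup => // tau.
    by case/H0_unit_proj => v unit_v ->; case: (povm2_prob_le1 P unit_v).
  by case/(H1_unit_proj d_gt0) => v unit_v ->; case: (povm2_prob_le1 P unit_v).
move=> delta le_delta; exists rho; split=> //.
by rewrite lerBlDr (le_trans le_1) // lerD2l le_delta.
Qed.
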